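(* Let $B=\mathrm{GF}(p^m)$ and $F=\mathrm{GF}(p^{mt})$ and assume $t$ is divisible by $p$. Let $\alpha^*\neq\overline{\alpha}$ be elements of $F$, and let $K_{\alpha^*,\overline{\alpha}}=\{z\in F:\mathrm{Tr}_{F/B}(z(\overline{\alpha}-\alpha^* ))=0\}$. Let $\{u_1,\dots,u_{t-1}\}$ and $\{v_1,\dots,v_{t-1}\}$ be two bases of $K_{\alpha^*,\overline{\alpha}}$ over $B$, completed to bases $\{u_1,\dots,u_t\}$ and $\{v_1,\dots,v_t\}$ of $F$ over $B$. For $i\in[t]$ set $p_i(x)=\dfrac{\mathrm{Tr}_{F/B}(u_i(x-\alpha^* ))}{x-\alpha^*}$ and $q_i(x)=\dfrac{\mathrm{Tr}_{F/B}(v_i(x-\overline{\alpha}))}{x-\overline{\alpha}}$. Let $f\in F[x]$. Then $\mathrm{Tr}_{F/B}\big(p_t(\overline{\alpha})f(\overline{\alpha})\big)$ is a $B$-linear combination of the traces $\mathrm{Tr}_{F/B}\big(q_i(\overline{\alpha})f(\overline{\alpha})\big)$, $i\in[t-1]$, and $\mathrm{Tr}_{F/B}\big(q_t(\alpha^* )f(\alpha^* )\big)$ is a $B$-linear combination of the traces $\mathrm{Tr}_{F/B}\big(p_i(\alpha^* )f(\alpha^* )\big)$, $i\in[t-1]$.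
   Context: $\mathrm{Tr}_{F/B}(x)=\sum_{i=0}^{t-1}x^{|B|^i}$ is the field trace; $[t]=\{1,\dots,t\}$. *)

From HB Require Import structures.
From mathcomp Require Import all_boot all_order all_algebra all_field.
Set Implicit Arguments. Unset Strict Implicit. Unset Printing Implicit Defensive.
Import GRing.Theory.
Local Open Scope ring_scope.

Definition trFB (Bf : finFieldType) (L : fieldExtType Bf) (t : nat) (x : L) : L :=
  \sum_(i < t) x ^+ (#|Bf| ^ i).

(* The polynomial  Tr_{F/B}(u (x - a)) / (x - a)  in F[x]
   (exact polynomial quotient). *)
Definition trpoly (Bf : finFieldType) (L : fieldExtType Bf) (t : nat) (u a : L)
  : {poly L} :=
  (\sum_(j < t) ((u%:P * ('X - a%:P)) ^+ (#|Bf| ^ j))) %/ ('X - a%:P).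

From HB Require Import structures.
From mathcomp Require Import all_boot all_order all_algebra all_field.
From mathcomp Require Import all_fingroup all_solvable.
Import GRing.Theory.
Local Open Scope ring_scope.
Set Implicit Arguments. Unset Strict Implicit. Unset Printing Implicit Defensive.

(* Write  p_u(x) = Tr(u (x - a)) / (x - a).  Differentiating
   p_u(x) (x - a) = Tr(u (x - a))  at  x = a  gives  p_u(a) = u: every term of
   the trace but the first is a |B|-th power, and |B| vanishes in F.  For
   b <> a the value  (b - a) p_u(b) = Tr(u (b - a))  lies in B, so its trace is
   t Tr(u (b - a)) = 0  since p divides t.  Hence  p_t(abar)  lies in the kernel K,
   which is spanned by the  v_i = q_i(abar), i in [t-1], and the B-linearity of
   the trace gives the first combination.  The second one is symmetric, K being
   also the kernel of  z |-> Tr(z (astar - abar)). *)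

Section FieldTrace.

Variables (Bf : finFieldType) (L : fieldExtType Bf).
Local Notation q := #|Bf|.

Lemma pnat_pchar_card : [pchar L].-nat q.
Proof.
have [p _ pcharBp] := finPcharP Bf.
have /abelem_pgroup : (p.-abelem [set: Bf])%g := fin_ring_pchar_abelem pcharBp.
rewrite /pgroup cardsT; apply: sub_in_pnat => r _.
by move=> /eqP->; rewrite (pchar_lalg L p).
Qed.

Lemma pchar_card : (q%:R : L) = 0.
Proof.
have pcharLp : pdiv q \in [pchar L].
  by apply: pnatPpi pnat_pchar_card _; rewrite pi_pdiv finNzRing_gt1.
by apply/eqP; rewrite -(dvdn_pcharf pcharLp) pdiv_dvd.
Qed.

Lemma expr_card_fix (c : Bf) i : c ^+ (q ^ i) = c.
Proof.
by elim: i => [|i IHi]; rewrite ?expr1 // expnSr exprM IHi expf_card.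
Qed.

Variable t : nat.

Lemma trFB_is_linear : linear (@trFB Bf L t).
Proof.
move=> c x y; rewrite /trFB scaler_sumr -big_split; apply: eq_bigr => i _.
by rewrite exprDn_pchar ?pnatX ?pnat_pchar_card // exprZn expr_card_fix.
Qed.

HB.instance Definition _ :=
  GRing.isLinear.Build Bf L L *:%R (@trFB Bf L t) trFB_is_linear.

Lemma trFB_span_mul n (s : seq L) (w y : L) : size s = n -> w \in <<s>>%VS ->
  exists c : 'I_n -> Bf, trFB t (w * y) = \sum_(i < n) c i *: trFB t (s`_i * y).
Proof.
move=> <- /(coord_span (X := in_tuple s)) ->.
exists (fun i => coord (in_tuple s) i w).
by rewrite mulr_suml linear_sum; apply: eq_bigr => i _; rewrite -scalerAl linearZ.
Qed.

Definition trpoly_num (u a : L) : {poly L} :=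
  \sum_(j < t) (u%:P * ('X - a%:P)) ^+ (q ^ j).

Lemma horner_trpoly_num (u a x : L) : (trpoly_num u a).[x] = trFB t (u * (x - a)).
Proof.
rewrite horner_sum; apply: eq_bigr => j _.
by rewrite horner_exp hornerM hornerC hornerXsubC.
Qed.

Lemma trpoly_mulXsubC (u a : L) : trpoly t u a * ('X - a%:P) = trpoly_num u a.
Proof.
by apply: divpK; rewrite dvdp_XsubCl /root horner_trpoly_num subrr mulr0 linear0.
Qed.

Lemma horner_trpoly (u a x : L) : x != a ->
  (trpoly t u a).[x] = trFB t (u * (x - a)) / (x - a).
Proof.
rewrite -subr_eq0 => xa; rewrite -horner_trpoly_num -trpoly_mulXsubC.
by rewrite hornerM hornerXsubC mulfK.
Qed.

Lemma deriv_trpoly_num (u a : L) : (0 < t)%N -> (trpoly_num u a)^`() = u%:P.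
Proof.
move=> t_gt0; rewrite /trpoly_num raddf_sum /= -(prednK t_gt0).
rewrite big_ord_recl big1 ?addr0.
  by rewrite expn0 expr1 derivM derivC derivXsubC mul0r add0r mulr1.
move=> i _; rewrite deriv_exp -mulr_natr natrX.
by rewrite -polyC_natr pchar_card polyC0 expr0n mulr0.
Qed.

Lemma horner_trpoly_root (u a : L) : (0 < t)%N -> (trpoly t u a).[a] = u.
Proof.
move=> t_gt0; have := congr1 (fun r => r^`().[a]) (trpoly_mulXsubC u a).
rewrite /= deriv_trpoly_num // hornerC derivM derivXsubC hornerD !hornerM.
by rewrite hornerXsubC subrr mulr0 add0r hornerC mulr1.
Qed.

Hypothesis dimL : \dim {:L} = t.

Lemma expr_card_dim (x : L) : x ^+ (q ^ t) = x.
Proof.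
by have := Fermat's_little_theorem (aspacef L) x; rewrite memvf dimL => /esym/eqP.
Qed.

(* The Frobenius [x |-> x ^+ q] permutes the conjugates [x ^+ (q ^ i)] cyclically. *)
Lemma trFB_frobenius (x : L) : trFB t x ^+ q = trFB t x.
Proof.
have hq : [pchar L].-nat q := pnat_pchar_card.
have frob0 : (0 : L) ^+ q = 0 by rewrite expr0n eqn0Ngt ltnW ?finNzRing_gt1.
rewrite /trFB (big_morph (fun y : L => y ^+ q) (fun a b => exprDn_pchar a b hq) frob0).
have shift i : (x ^+ (q ^ i)) ^+ q = x ^+ (q ^ i.+1) by rewrite -exprM -expnSr.
rewrite (eq_bigr _ (fun i _ => shift (nat_of_ord i))).
have := @big_ord_recl L 0 +%R t (fun i : 'I_t.+1 => x ^+ (q ^ i)).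
by rewrite big_ord_recr /= expr_card_dim expn0 expr1 addrC => /addrI.
Qed.

Hypothesis natr_t_eq0 : (t%:R : L) = 0.

Lemma trFB_trFB (x : L) : trFB t (trFB t x) = 0.
Proof.
rewrite {1}/trFB (eq_bigr (fun _ => trFB t x)).
  by rewrite sumr_const card_ord -mulr_natr natr_t_eq0 mulr0.
move=> i _; elim: (nat_of_ord i) => [|k IHk]; first by rewrite expr1.
by rewrite expnSr exprM IHk trFB_frobenius.
Qed.

Lemma trFB_mul_horner_trpoly (u a b : L) : b != a ->
  trFB t ((trpoly t u a).[b] * (b - a)) = 0.
Proof. by move=> ba; rewrite horner_trpoly // divfK ?subr_eq0 // trFB_trFB. Qed.

Lemma trFB_trpoly_comb n (u a b : L) (s : seq L) (f : {poly L}) :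
  b != a -> (n <= size s)%N ->
  (forall z, trFB t (z * (b - a)) = 0 -> z \in <<take n s>>%VS) ->
  exists c : 'I_n -> Bf, trFB t ((trpoly t u a).[b] * f.[b]) =
    \sum_(i < n) c i *: trFB t ((trpoly t (nth 0 s i) b).[b] * f.[b]).
Proof.
move=> ba ns kerK; have t_gt0 : (0 < t)%N by rewrite -dimL adim_gt0.
have [c ->] :=
  trFB_span_mul f.[b] (size_takel ns) (kerK _ (trFB_mul_horner_trpoly u ba)).
by exists c; apply: eq_bigr => i _; rewrite nth_take // horner_trpoly_root.
Qed.

End FieldTrace.

Theorem corollary2 (p m t : nat) (Bf : finFieldType) (L : fieldExtType Bf)
  (p_prime : prime p) (cardB : #|Bf| = (p ^ m)%N) (dimL : \dim {:L} = t)
  (p_dvd_t : (p %| t)%N)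
  (astar abar : L) (hne : astar != abar)
  (u v : seq L) (size_u : size u = t) (size_v : size v = t)
  (u_basisK_free : free (take t.-1 u))
  (u_basisK_span : forall z : L,
      (z \in <<take t.-1 u>>%VS) = (trFB t (z * (abar - astar)) == 0))
  (v_basisK_free : free (take t.-1 v))
  (v_basisK_span : forall z : L,
      (z \in <<take t.-1 v>>%VS) = (trFB t (z * (abar - astar)) == 0))
  (u_basis : basis_of fullv u) (v_basis : basis_of fullv v)
  (f : {poly L}) :
  (exists c : 'I_t.-1 -> Bf,
      trFB t ((trpoly t (nth 0 u t.-1) astar).[abar] * f.[abar])
      = \sum_(i < t.-1) c i *: trFB t ((trpoly t (nth 0 v i) abar).[abar] * f.[abar]))
  /\
  (exists c : 'I_t.-1 -> Bf,
      trFB t ((trpoly t (nth 0 v t.-1) abar).[astar] * f.[astar])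
      = \sum_(i < t.-1) c i *: trFB t ((trpoly t (nth 0 u i) astar).[astar] * f.[astar])).
Proof.
have pcharLp : p \in [pchar L] by rewrite (pchar_lalg L p) (card_finPcharP cardB p_prime).
have natr_t_eq0 : (t%:R : L) = 0 by apply/eqP; rewrite -(dvdn_pcharf pcharLp).
have [u_size v_size] : (t.-1 <= size u)%N /\ (t.-1 <= size v)%N.
  by rewrite size_u size_v leq_pred.
split.
  apply: trFB_trpoly_comb => //; first by rewrite eq_sym.
  by move=> z trz; rewrite v_basisK_span trz.
apply: trFB_trpoly_comb => // z trz.
by rewrite u_basisK_span -opprB mulrN raddfN /= trz oppr0.
Qed.
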